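(* For every integer $n\ge 0$, \[ \left(\frac23\right)^n p_n\!\left(\frac14\right) = \sum_{k=0}^n B_{n-k}^{(-k)}. \]
   Context: Define polynomial sequences $(p_k(x))_{k\ge -1}$ and $(q_k(x))_{k\ge -1}$ by $p_{-1}(x)=0$, $q_{-1}(x)=1$ and, for $k\ge -1$, $p_{k+1}(x) = 2(kx+1)p_k(x) + 2x(1-x)p_k'(x) + q_k(x)$, $q_{k+1}(x) = (2(k+1)x+1)q_k(x) + 2x(1-x)q_k'(x)$. For an integer $k$, $\mathrm{Li}_k(z)=\sum_{m\ge1} z^m/m^k$. The poly-Bernoulli numbers $B_n^{(k)}\in\mathbb{Q}$ are defined by $\sum_{n\ge0} B_n^{(k)} \frac{t^n}{n!} = \frac{\mathrm{Li}_k(1-e^{-t})}{1-e^{-t}}$. *)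

From HB Require Import structures.
From mathcomp Require Import all_boot all_order all_algebra.
Set Implicit Arguments. Unset Strict Implicit. Unset Printing Implicit Defensive.
Import Order.TTheory GRing.Theory Num.Theory.
Local Open Scope ring_scope.

(* The pair (p_{j-1}, q_{j-1}) for j : nat, i.e. PQ j is indexed with a shift by one:
   PQ 0 = (p_{-1}, q_{-1}) = (0, 1), and PQ (j+1) is obtained from PQ j by the
   recurrence with k = j - 1. *)
Fixpoint PQ (j : nat) : {poly rat} * {poly rat} :=
  match j with
  | 0 => (0, 1)
  | j'.+1 =>
      let pk := (PQ j').1 in
      let qk := (PQ j').2 in
      let k : rat := ((Posz j') - 1)%:~R in
      (2%:P * (k *: 'X + 1) * pk + 2%:P * 'X * (1 - 'X) * pk^`() + qk,
       (2%:P * ((k + 1) *: 'X) + 1) * qk + 2%:P * 'X * (1 - 'X) * qk^`())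
  end.

Definition pol_p (n : nat) : {poly rat} := (PQ n.+1).1.
Definition pol_q (n : nat) : {poly rat} := (PQ n.+1).2.

(* Truncation to degree <= n of the formal power series 1 - e^{-t}
   = - sum_{j>=1} (-t)^j / j!. *)
Definition one_minus_exp_neg (n : nat) : {poly rat} :=
  - \sum_(1 <= j < n.+1) (((-1) ^+ j) / (j`!)%:R) *: 'X^j.

(* Poly-Bernoulli numbers: B_n^{(k)} = n! [t^n] Li_k(1-e^{-t})/(1-e^{-t})
   = n! [t^n] sum_{m>=1} (1-e^{-t})^{m-1} / m^k.  Since (1-e^{-t})^{m-1}
   has order m-1, only m <= n+1 contribute, and the coefficient of t^n
   only depends on 1-e^{-t} modulo t^{n+1}. *)
Definition polyBernoulli (n : nat) (k : int) : rat :=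
  (n`!)%:R * \sum_(1 <= m < n.+2)
     ((one_minus_exp_neg n) ^+ m.-1)`_n * ((m%:R : rat) ^ (- k)).

(* Both sides satisfy the recurrence [main_rec]
     4 s_n = 2 s_(n-1) + sum_i C(n,i) s_i + 3,
   which determines them.  For the left side, induction on the defining
   recurrences gives p_n = (1-x) p_(n-1) + x sum_i C(n,i) b^(n-i) p_i + (1-x) b^n
   with b = 2(1-x) (and a similar identity for q_n); at x = 1/4 we have b = 3/2,
   and the weight (2/3)^n turns this b-binomial transform into the ordinary one.
   For the right side, B_j^(-k) = sum_m (-1)^(j-m) m! S(j,m) (m+1)^k, and the
   recurrences of these signed Stirling numbers make the summand of the
   recurrence a discrete gradient, which telescopes along each antidiagonal
   j + k = const. *)

From mathcomp Require Import all_boot all_order all_algebra.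
From mathcomp Require Import ring lra.
Import GRing.Theory Num.Theory.
Local Open Scope ring_scope.

Section BinomialTransform.
Context {R : comNzRingType}.
Implicit Types (a b c : R) (f g : nat -> R).

Definition binomT a f (n : nat) : R :=
  \sum_(i < n.+1) 'C(n, i)%:R * a ^+ (n - i) * f i.

Lemma eq_binomT a f g n :
  (forall i, (i <= n)%N -> f i = g i) -> binomT a f n = binomT a g n.
Proof. by move=> fg; apply: eq_bigr => i _; rewrite fg // -ltnS. Qed.

Lemma binomTD a f g n :
  binomT a (fun i => f i + g i) n = binomT a f n + binomT a g n.
Proof. by rewrite /binomT -big_split /=; apply: eq_bigr => i _; ring. Qed.

Lemma binomTB a f g n :
  binomT a (fun i => f i - g i) n = binomT a f n - binomT a g n.
Proof. by rewrite /binomT -sumrB /=; apply: eq_bigr => i _; ring. Qed.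

Lemma binomTZ a c f n : binomT a (fun i => c * f i) n = c * binomT a f n.
Proof. by rewrite /binomT mulr_sumr; apply: eq_bigr => i _; ring. Qed.

Lemma binomT_sum a (B : nat) (F : nat -> 'I_B -> R) n :
  binomT a (fun i => \sum_(m < B) F i m) n = \sum_(m < B) binomT a (F^~ m) n.
Proof. by rewrite /binomT exchange_big; apply: eq_bigr => i _; rewrite mulr_sumr. Qed.

Lemma binomT0 a f : binomT a f 0 = f 0%N.
Proof. by rewrite /binomT big_ord1 expr0 !mul1r. Qed.

Lemma binomTS a f n :
  binomT a f n.+1 = a * binomT a f n + binomT a (fun i => f i.+1) n.
Proof.
rewrite /binomT big_ord_recl bin0 subn0 mul1r.
rewrite (eq_bigr (fun i : 'I_n.+1 => 'C(n, i.+1)%:R * a ^+ (n - i) * f i.+1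
     + 'C(n, i)%:R * a ^+ (n - i) * f i.+1)); last first.
  by move=> i _; rewrite /= binS natrD subSS; ring.
rewrite big_split /= addrA; congr (_ + _).
rewrite mulr_sumr [RHS]big_ord_recl bin0 subn0 mul1r exprS mulrA; congr (_ + _).
rewrite big_ord_recr /= bin_small // !mul0r addr0.
apply: eq_bigr => i _; rewrite /bump /= add1n -[(n - i)%N]subSS subSn // exprS; ring.
Qed.

Lemma binomT_id f n : binomT 0 f n = f n.
Proof.
rewrite /binomT big_ord_recr /= subnn binn expr0 !mul1r big1 ?add0r // => i _.
by rewrite expr0n subn_eq0 leqNgt ltn_ord mulr0 mul0r.
Qed.

Lemma binomT_comp a b f n : binomT a (binomT b f) n = binomT (a + b) f n.
Proof.
elim: n f => [|n IH] f; first by rewrite !binomT0.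
have shift : binomT a (fun i => binomT b f i.+1) n =
    binomT a (fun i => b * binomT b f i + binomT b (fun j => f j.+1) i) n.
  by apply: eq_binomT => i _; rewrite binomTS.
by rewrite binomTS shift binomTD binomTZ !IH binomTS; ring.
Qed.

Lemma binomT_expr a c n : binomT a (GRing.exp c) n = (a + c) ^+ n.
Proof. by rewrite exprDn; apply: eq_bigr => i _; rewrite mulr_natl; ring. Qed.

Lemma binomT_delta a n : binomT a (fun i => (i == 0)%:R) n = a ^+ n.
Proof.
rewrite /binomT big_ord_recl bin0 subn0 mul1r mulr1 big1 ?addr0 // => i _.
by rewrite mulr0.
Qed.

Lemma binomT1_split f n :
  binomT 1 f n = f n + \sum_(i < n) 'C(n, i)%:R * f i.
Proof.
rewrite /binomT big_ord_recr /= binn subnn expr0 !mul1r addrC; congr (_ + _).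
by apply: eq_bigr => i _; rewrite expr1n mulr1.
Qed.

Lemma binomT_rescale c a f n :
  c ^+ n * binomT a f n = binomT (c * a) (fun i => c ^+ i * f i) n.
Proof.
rewrite /binomT mulr_sumr; apply: eq_bigr => i _.
have le_in : (i <= n)%N by rewrite -ltnS.
rewrite -{1}(subnKC le_in) exprD exprMn; ring.
Qed.

End BinomialTransform.

Section DifferentialOperator.
Context {R : comNzRingType}.
Implicit Types (p q : {poly R}).

Definition diffL p : {poly R} := 2 * 'X * (1 - 'X) * p^`().
Definition beta : {poly R} := 2 * (1 - 'X).

Lemma deriv_natr (k : nat) : (k%:R : {poly R})^`() = 0.
Proof. by rewrite -polyC_natr derivC. Qed.

Lemma deriv1subX : (1 - 'X : {poly R})^`() = -1.
Proof. by rewrite derivB -polyC1 derivC derivX sub0r. Qed.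

Lemma deriv_beta : beta^`() = -2.
Proof. by rewrite /beta derivM deriv1subX deriv_natr; ring. Qed.

Lemma diffLD p q : diffL (p + q) = diffL p + diffL q.
Proof. by rewrite /diffL derivD; ring. Qed.

Lemma diffL_natrM (k : nat) p : diffL (k%:R * p) = k%:R * diffL p.
Proof. by rewrite /diffL derivM deriv_natr; ring. Qed.

Lemma diffL0 : diffL 0 = 0.
Proof. by rewrite /diffL deriv0 mulr0. Qed.

Lemma diffL1 : diffL 1 = 0.
Proof. by rewrite /diffL -polyC1 derivC mulr0. Qed.

Lemma diffL_sum m (F : 'I_m -> {poly R}) :
  diffL (\sum_(i < m) F i) = \sum_(i < m) diffL (F i).
Proof. exact: (big_morph diffL diffLD diffL0). Qed.

Lemma diffL_1subXM p :
  diffL ((1 - 'X) * p) = - 2 * 'X * (1 - 'X) * p + (1 - 'X) * diffL p.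
Proof. by rewrite /diffL derivM deriv1subX; ring. Qed.

Lemma deriv_beta_exp (r : nat) : (beta ^+ r.+1)^`() = - 2 * r.+1%:R * beta ^+ r.
Proof. by rewrite deriv_exp deriv_beta -mulr_natr; ring. Qed.

Lemma diffL_XbetaM (r : nat) p : diffL ('X * beta ^+ r * p) =
  'X * beta ^+ r.+1 * p - 2 * r%:R * 'X * 'X * beta ^+ r * p
  + 'X * beta ^+ r * diffL p.
Proof.
rewrite /diffL !derivM derivX; case: r => [|r].
  by rewrite expr0 -polyC1 derivC /beta; ring.
by rewrite deriv_beta_exp !exprS /beta; ring.
Qed.

Lemma diffL_1subX_beta (r : nat) :
  diffL ((1 - 'X) * beta ^+ r) = - (r.+1%:R * 'X * beta ^+ r.+1).
Proof.
rewrite /diffL derivM deriv1subX; case: r => [|r].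
  by rewrite expr0 -polyC1 derivC /beta; ring.
by rewrite deriv_beta_exp !exprS /beta; ring.
Qed.

Lemma diffL_X_binomT n (g G : nat -> {poly R}) (d e : {poly R}) :
  (forall i, (i <= n)%N -> diffL (g i) = G i - (2 * (i%:R + d) * 'X + e) * g i) ->
  (2 * (n%:R + d) * 'X + e) * ('X * binomT beta g n) + diffL ('X * binomT beta g n)
   = 'X * (beta * binomT beta g n + binomT beta G n).
Proof.
move=> eig.
have -> : 'X * binomT beta g n =
    \sum_(i < n.+1) 'C(n, i)%:R * ('X * beta ^+ (n - i) * g i).
  by rewrite /binomT mulr_sumr; apply: eq_bigr => i _; ring.
rewrite diffL_sum mulr_sumr -big_split /binomT mulr_sumr -big_split mulr_sumr.
apply: eq_bigr => i _ /=; have le_in : (i <= n)%N by rewrite -ltnS.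
by rewrite diffL_natrM diffL_XbetaM eig // natrB // exprS; ring.
Qed.

End DifferentialOperator.

Definition pS j : {poly rat} := (PQ j).1.
Definition qS j : {poly rat} := (PQ j).2.

Lemma polyC_intr (j : nat) : ((j%:~R : rat))%:P = j%:R :> {poly rat}.
Proof. by rewrite -polyC_natr. Qed.

Lemma qS_rec j : qS j.+1 = (2 * j%:R * 'X + 1) * qS j + diffL (qS j).
Proof.
by rewrite /qS /diffL /= intrB subrK -mul_polyC polyC_natr polyC_intr; ring.
Qed.

Lemma pS_rec j :
  pS j.+1 = (2 * (j%:R - 1) * 'X + 2) * pS j + diffL (pS j) + qS j.
Proof.
rewrite /pS /qS /diffL /= intrB -mul_polyC polyC_natr rmorphB /= rmorph1.
by rewrite polyC_intr; ring.
Qed.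

Lemma qS_binomT n :
  qS n.+1 = (1 - 'X) * qS n + 'X * binomT beta (fun i => qS i.+1) n.
Proof.
elim: n => [|n IH]; first by rewrite binomT0 qS_rec diffL1 /qS /=; ring.
set T := binomT beta _ n in IH *.
have eig i : (i <= n)%N -> diffL (qS i.+1) =
    qS i.+2 - (2 * (i%:R + 1) * 'X + 1) * qS i.+1.
  by move=> _; rewrite (qS_rec i.+1) -[i.+1%:R]natr1; ring.
have diffL_qS : diffL (qS n) = qS n.+1 - (2 * n%:R * 'X + 1) * qS n.
  by rewrite (qS_rec n); ring.
have diffL_XT : diffL ('X * T) = 'X * (beta * T + binomT beta (fun i => qS i.+2) n)
    - (2 * (n%:R + 1) * 'X + 1) * ('X * T).
  by rewrite -(diffL_X_binomT _ _ _ _ _ eig) /T; ring.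
rewrite (qS_rec n.+1) IH diffLD diffL_1subXM diffL_qS diffL_XT IH binomTS.
by rewrite -[n.+1%:R]natr1 /T; ring.
Qed.

Lemma pS_binomT n : pS n.+1 =
  (1 - 'X) * pS n + 'X * binomT beta (fun i => pS i.+1) n + (1 - 'X) * beta ^+ n.
Proof.
elim: n => [|n IH]; first by rewrite binomT0 pS_rec /pS /qS /= diffL0; ring.
set T := binomT beta _ n in IH *.
have eig i : (i <= n)%N -> diffL (pS i.+1) =
    (pS i.+2 - qS i.+1) - (2 * (i%:R + 0) * 'X + 2) * pS i.+1.
  by move=> _; rewrite (pS_rec i.+1) -[i.+1%:R]natr1; ring.
have diffL_pS : diffL (pS n) = pS n.+1 - (2 * (n%:R - 1) * 'X + 2) * pS n - qS n.
  by rewrite (pS_rec n); ring.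
have diffL_XT : diffL ('X * T) =
    'X * (beta * T + binomT beta (fun i => pS i.+2 - qS i.+1) n)
    - (2 * (n%:R + 0) * 'X + 2) * ('X * T).
  by rewrite -(diffL_X_binomT _ _ _ _ _ eig) /T; ring.
rewrite (pS_rec n.+1) IH !diffLD diffL_1subX_beta diffL_1subXM diffL_pS diffL_XT.
rewrite IH binomTB (qS_binomT n) binomTS -[n.+1%:R]natr1 exprS /T /beta.
ring.
Qed.

Lemma horner_binomT {R : comNzRingType} (a : {poly R}) (g : nat -> {poly R}) n x :
  (binomT a g n).[x] = binomT a.[x] (fun i => (g i).[x]) n.
Proof.
rewrite /binomT horner_sum; apply: eq_bigr => i _.
by rewrite !hornerM -polyC_natr hornerC horner_exp.
Qed.

Definition main_rec (s : nat -> rat) : Prop := forall n,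
  4 * s n = (if n is m.+1 then 2 * s m else 0) + binomT 1 s n + 3.

Lemma main_rec_uniq s t : main_rec s -> main_rec t -> s =1 t.
Proof.
move=> rec_s rec_t n; elim: n {-2}n (leqnn n) => [|N IH] n le_nN.
  move: le_nN; rewrite leqn0 => /eqP ->.
  by move: (rec_s 0%N) (rec_t 0%N); rewrite !binomT0 /=; lra.
case: (leqP n N) => [|lt_Nn]; first exact: IH.
have -> : n = N.+1 by apply/eqP; rewrite eqn_leq le_nN.
have low_eq : \sum_(i < N.+1) 'C(N.+1, i)%:R * s i =
              \sum_(i < N.+1) 'C(N.+1, i)%:R * t i.
  by apply: eq_bigr => i _; rewrite IH // -ltnS.
move: (rec_s N.+1) (rec_t N.+1); rewrite !binomT1_split low_eq (IH N) //; lra.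
Qed.

Lemma main_rec_pS : main_rec (fun n => (2 / 3) ^+ n * (pS n.+1).[1 / 4]).
Proof.
move=> n; rewrite pS_binomT.
have beta_quarter : beta.[1 / 4] = 3 / 2 :> rat by rewrite /beta !hornerE.
have rescale : binomT 1 (fun i => (2 / 3) ^+ i * (pS i.+1).[1 / 4]) n =
    (2 / 3) ^+ n * binomT (3 / 2) (fun i => (pS i.+1).[1 / 4]) n.
  by rewrite binomT_rescale mulf_div mulrC divff.
rewrite rescale !(hornerD, hornerM, hornerN) hornerX horner_exp horner_binomT.
rewrite beta_quarter -polyC1 hornerC.
case: n {rescale} => [|m]; first by rewrite binomT0 /pS /= horner0 !expr0; field.
have inv_pow : (3 / 2) ^+ m = ((2 / 3) ^+ m)^-1 :> rat by rewrite -exprVn invf_div.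
rewrite !exprS inv_pow; field.
by rewrite expf_neq0.
Qed.

Lemma coef_one_minus_exp_neg N k : (one_minus_exp_neg N)`_k =
  if (0 < k <= N)%N then - ((-1) ^+ k / k`!%:R) else 0.
Proof.
elim: N => [|N IH].
  by rewrite /one_minus_exp_neg big_geq // oppr0 coef0; case: k.
rewrite /one_minus_exp_neg big_nat_recr //= opprD coefD -/(one_minus_exp_neg N).
rewrite IH coefN coefZ coefXn; case: (eqVneq k N.+1) => [->|ne_kN].
  by rewrite ltnn andbF leqnn mulr1 add0r.
by rewrite mulr0 oppr0 addr0 [(k <= N.+1)%N]leq_eqVlt (negbTE ne_kN).
Qed.

Lemma coef_1sub_one_minus_exp_neg N l : (l <= N)%N ->
  (1 - one_minus_exp_neg N)`_l = (-1) ^+ l / l`!%:R.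
Proof.
move=> le_lN; rewrite coefB coef1 coef_one_minus_exp_neg le_lN andbT.
by case: l le_lN => [|l] _ /=; rewrite ?expr0 ?divr1 ?subr0 ?sub0r ?opprK.
Qed.

Lemma coef_exp_small {R : nzRingType} (p : {poly R}) m k :
  p`_0 = 0 -> (k < m)%N -> (p ^+ m)`_k = 0.
Proof.
move=> p0; elim: m k => [|m IH] k // lt_km.
rewrite exprS coefMr big1 // => j _; case: (ltnP j m) => [lt_jm|le_mj].
  by rewrite IH ?mulr0.
have -> : nat_of_ord j = k.
  by apply/eqP; rewrite eqn_leq -ltnS ltn_ord (leq_trans _ le_mj) // -ltnS.
by rewrite subnn p0 mul0r.
Qed.

Definition agree_upto {R : nzRingType} (i : nat) (p q : {poly R}) :=
  forall k, (k <= i)%N -> p`_k = q`_k.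

Section AgreeUpto.
Context {R : comNzRingType}.
Implicit Types p q : {poly R}.

Lemma agree_uptoM i p p' q q' :
  agree_upto i p p' -> agree_upto i q q' -> agree_upto i (p * q) (p' * q').
Proof.
move=> pp' qq' k le_ki; rewrite !coefM; apply: eq_bigr => j _.
have le_ji : (j <= i)%N by apply: leq_trans le_ki; rewrite -ltnS.
by rewrite pp' // qq' // (leq_trans (leq_subr _ _) le_ki).
Qed.

Lemma agree_uptoX i p q m : agree_upto i p q -> agree_upto i (p ^+ m) (q ^+ m).
Proof. by move=> pq; elim: m => [|m IH] // k; rewrite !exprS; apply: agree_uptoM. Qed.

End AgreeUpto.

Lemma agree_upto_one_minus_exp_neg i N : (i <= N)%N ->
  agree_upto i (one_minus_exp_neg N) (one_minus_exp_neg i).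
Proof.
move=> le_iN k le_ki; rewrite !coef_one_minus_exp_neg le_ki andbT.
by rewrite (leq_trans le_ki le_iN) andbT.
Qed.

(* [stir j m = (-1)^(j-m) m! S(j,m)] is j! times the coefficient of t^j in
   (1 - e^{-t})^m. *)
Definition stir (j m : nat) : rat := j`!%:R * ((one_minus_exp_neg j) ^+ m)`_j.

Lemma stirE j N m : (j <= N)%N ->
  stir j m = j`!%:R * ((one_minus_exp_neg N) ^+ m)`_j.
Proof.
move=> le_jN.
by rewrite /stir (agree_uptoX _ _ _ m (agree_upto_one_minus_exp_neg _ _ le_jN)).
Qed.

Lemma stir_eq0 j m : (j < m)%N -> stir j m = 0.
Proof.
by move=> lt_jm; rewrite /stir coef_exp_small ?mulr0 // coef_one_minus_exp_neg.
Qed.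

Lemma stir_0r j : stir j 0 = (j == 0)%:R.
Proof. by rewrite /stir expr0 coef1; case: j => [|j] //=; rewrite mulr0. Qed.

Lemma fact_neq0 n : (n`!%:R : rat) != 0.
Proof. by rewrite pnatr_eq0 -lt0n fact_gt0. Qed.

(* Multiplying by 1 - (1 - e^{-t}) = e^{-t} is the binomial transform with a = -1. *)
Lemma binomT_stir j m :
  binomT (-1) (stir^~ m) j = stir j m - stir j m.+1.
Proof.
have -> : stir j m - stir j m.+1 =
    j`!%:R * ((one_minus_exp_neg j ^+ m) * (1 - one_minus_exp_neg j))`_j.
  by rewrite /stir mulrBr mulr1 exprSr coefB mulrBr.
rewrite coefM mulr_sumr; apply: eq_bigr => i _.
have le_ij : (i <= j)%N by rewrite -ltnS.
rewrite (stirE _ _ m le_ij) coef_1sub_one_minus_exp_neg ?leq_subr //.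
have -> : j`!%:R = 'C(j, i)%:R * i`!%:R * (j - i)`!%:R :> rat.
  by rewrite -!natrM -mulnA bin_fact.
by field; rewrite fact_neq0.
Qed.

Lemma agree_upto_deriv_one_minus_exp_neg j :
  agree_upto j (one_minus_exp_neg j.+1)^`() (1 - one_minus_exp_neg j.+1).
Proof.
move=> l le_lj; rewrite coef_deriv coef_1sub_one_minus_exp_neg ?(leq_trans le_lj) //.
rewrite coef_one_minus_exp_neg /= ltnS le_lj factS natrM exprS -mulr_natr.
by field; rewrite fact_neq0 -mulrS pnatr_eq0.
Qed.

(* The derivative of (1 - e^{-t})^m is m (1 - e^{-t})^(m-1) e^{-t}. *)
Lemma stirS j m : stir j.+1 m = m%:R * (stir j m.-1 - stir j m).
Proof.
case: m => [|m]; first by rewrite !stir_0r mul0r.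
rewrite /= (stirE _ _ m (leqnSn j)) (stirE _ _ m.+1 (leqnSn j)) /stir.
set w := one_minus_exp_neg j.+1.
have deriv_coef : ((w ^+ m.+1)^`())`_j = m.+1%:R * ((w ^+ m)`_j - (w ^+ m.+1)`_j).
  rewrite deriv_exp /= coefMn -mulr_natl.
  rewrite (agree_uptoM _ _ _ _ _ (agree_upto_deriv_one_minus_exp_neg j)
                       (fun k _ => erefl ((w ^+ m)`_k))) //.
  by rewrite mulrBl mul1r -exprS coefB mulr1 mulr_natl.
rewrite coef_deriv -[_ *+ j.+1]mulr_natl in deriv_coef.
by rewrite factS natrM [_ * j`!%:R]mulrC -mulrA deriv_coef; ring.
Qed.

Lemma binomT_stirS j m : binomT 1 (fun i => stir i.+1 m) j = m%:R * stir j m.-1.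
Proof.
rewrite (eq_binomT _ _ (fun i => m%:R * binomT (-1) (stir^~ m.-1) i)).
  by rewrite binomTZ binomT_comp subrr binomT_id.
move=> i _; rewrite stirS; case: m => [|m]; first by rewrite !mul0r.
by rewrite binomT_stir.
Qed.

Implicit Types phi psi : nat -> rat.

Definition stir_ev j (phi : nat -> rat) : rat := \sum_(m < j.+1) stir j m * phi m.

Lemma eq_stir_ev j phi psi : phi =1 psi -> stir_ev j phi = stir_ev j psi.
Proof. by move=> eq_phi; apply: eq_bigr => m _; rewrite eq_phi. Qed.

Lemma stir_evB j phi psi :
  stir_ev j phi - stir_ev j psi = stir_ev j (fun m => phi m - psi m).
Proof. by rewrite /stir_ev -sumrB /=; apply: eq_bigr => m _; ring. Qed.

Lemma stir_evZ j c phi : c * stir_ev j phi = stir_ev j (fun m => c * phi m).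
Proof. by rewrite /stir_ev mulr_sumr; apply: eq_bigr => m _; ring. Qed.

Lemma stir_ev_widen j B phi :
  (j < B)%N -> stir_ev j phi = \sum_(m < B) stir j m * phi m.
Proof.
move=> lt_jB; rewrite /stir_ev (big_ord_widen B (fun m => stir j m * phi m) lt_jB).
rewrite big_mkcond; apply: eq_bigr => m _.
by case: ltnP => // lt_jm; rewrite stir_eq0 ?mul0r.
Qed.

Lemma stir_ev_shift j phi : \sum_(m < j.+2) m%:R * stir j m.-1 * phi m =
  stir_ev j (fun m => m.+1%:R * phi m.+1).
Proof.
by rewrite big_ord_recl !mul0r add0r; apply: eq_bigr => m _; rewrite lift0; ring.
Qed.

Lemma stir_evS j phi :
  stir_ev j.+1 phi = stir_ev j (fun m => m.+1%:R * phi m.+1 - m%:R * phi m).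
Proof.
rewrite /stir_ev (eq_bigr (fun m : 'I_j.+2 =>
    m%:R * stir j m.-1 * phi m - stir j m * (m%:R * phi m))); last first.
  by move=> m _; rewrite stirS; ring.
rewrite sumrB stir_ev_shift -(stir_ev_widen j j.+2 (fun m => m%:R * phi m)) //.
exact: stir_evB.
Qed.

Lemma binomT_stir_ev_expr j (f : nat -> rat) (x : nat -> nat) k :
  binomT 1 (fun l => stir_ev j (fun m => f m * (x m)%:R ^+ l)) k =
  stir_ev j (fun m => f m * (x m).+1%:R ^+ k).
Proof.
rewrite /stir_ev binomT_sum; apply: eq_bigr => m _.
by rewrite !binomTZ binomT_expr -natr1 addrC.
Qed.

Lemma binomT_stir_ev_succ j phi :
  binomT 1 (fun i => stir_ev i.+1 phi) j = stir_ev j (fun m => m.+1%:R * phi m.+1).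
Proof.
rewrite (eq_binomT _ _ (fun i => \sum_(m < j.+2) stir i.+1 m * phi m)); last first.
  by move=> i le_ij; apply: stir_ev_widen; rewrite ltnS.
rewrite binomT_sum -stir_ev_shift; apply: eq_bigr => m _.
rewrite (eq_binomT _ _ (fun i => phi m * stir i.+1 m)) => [|i _]; last exact: mulrC.
by rewrite binomTZ binomT_stirS mulrC mulrA.
Qed.

Definition pbern j k : rat := stir_ev j (fun m => m.+1%:R ^+ k).

Lemma polyBernoulliE j k : polyBernoulli j (- (Posz k)) = pbern j k.
Proof.
rewrite /polyBernoulli opprK big_add1 /= big_mkord mulr_sumr.
by apply: eq_bigr => m _; rewrite -exprnP mulrA.
Qed.

Definition binomT2 (h : nat -> nat -> rat) j k : rat :=
  binomT 1 (fun i => binomT 1 (h i) k) j.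

Lemma binomT_pbern j k : binomT 1 (pbern j) k = stir_ev j (fun m => m.+2%:R ^+ k).
Proof.
rewrite (eq_binomT _ _ (fun l => stir_ev j (fun m => 1 * m.+1%:R ^+ l))).
  by rewrite binomT_stir_ev_expr; apply: eq_stir_ev => m; rewrite mul1r.
by move=> l _; apply: eq_stir_ev => m; rewrite mul1r.
Qed.

Lemma pbern_balance j k :
  binomT2 (fun i => pbern i.+1) j k - binomT 1 (pbern j.+1) k - 2 * pbern j.+1 k
  + binomT 1 (pbern j) k + binomT 1 (fun l => pbern j l.+1) k
  - 2 * pbern j k.+1 + 2 * pbern j k = 0.
Proof.
have shifted : binomT 1 (fun l => pbern j l.+1) k =
    stir_ev j (fun m => m.+1%:R * m.+2%:R ^+ k).
  rewrite -binomT_stir_ev_expr; apply: eq_binomT => l _.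
  by apply: eq_stir_ev => m; rewrite exprS.
have iterated : binomT2 (fun i => pbern i.+1) j k =
    stir_ev j (fun m => m.+1%:R * m.+3%:R ^+ k).
  rewrite /binomT2 (eq_binomT _ _ (fun i => stir_ev i.+1 (fun m => m.+2%:R ^+ k))).
    by rewrite binomT_stir_ev_succ.
  by move=> i _; rewrite binomT_pbern.
rewrite iterated shifted !binomT_pbern /pbern !stir_evS !stir_evZ.
rewrite /stir_ev; repeat first [rewrite -sumrB | rewrite -big_split].
rewrite big1 // => m _ /=; rewrite exprS.
set a := m.+3%:R ^+ k; set b := m.+2%:R ^+ k; set c := m.+1%:R ^+ k.
by rewrite -!natr1; ring.
Qed.

Lemma pbern_0l k : pbern 0 k = 1.
Proof. by rewrite /pbern /stir_ev big_ord1 /= stir_0r mul1r expr1n. Qed.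

Lemma binomTN1_pbern_0r n : binomT (-1) (fun i => pbern i 0) n = (n == 0)%:R.
Proof.
rewrite (eq_binomT _ _ (fun i => \sum_(m < n.+1) stir i m)); last first.
  move=> i le_in; rewrite /pbern (stir_ev_widen _ n.+1) ?ltnS //.
  by apply: eq_bigr => m _; rewrite mulr1.
rewrite binomT_sum (eq_bigr (fun m : 'I_n.+1 => - (stir n m.+1 - stir n m))).
  rewrite sumrN -(big_mkord xpredT (fun m => stir n m.+1 - stir n m)).
  by rewrite telescope_sumr // opprB stir_0r stir_eq0 ?subr0.
by move=> m _; rewrite binomT_stir opprB.
Qed.

Lemma pbern_0r n : pbern n 0 = 1.
Proof.
have -> : pbern n 0 = binomT 1 (binomT (-1) (fun i => pbern i 0)) n.
  by rewrite binomT_comp subrr binomT_id.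
rewrite (eq_binomT _ _ (fun i => (i == 0)%:R)) ?binomT_delta ?expr1n // => i _.
exact: binomTN1_pbern_0r.
Qed.

Section Antidiagonal.
Implicit Types h : nat -> nat -> rat.

Definition adiag h n : rat := \sum_(k < n.+1) h (n - k)%N k.

Definition adiag_prev h n : rat := if n is n'.+1 then adiag h n' else 0.

Lemma eq_adiag_prev h1 h2 n :
  (forall j k, h1 j k = h2 j k) -> adiag_prev h1 n = adiag_prev h2 n.
Proof. by move=> eq_h; case: n => //= n; apply: eq_bigr => k _; rewrite eq_h. Qed.

Lemma adiag_prevD h1 h2 n :
  adiag_prev (fun j k => h1 j k + h2 j k) n = adiag_prev h1 n + adiag_prev h2 n.
Proof. by case: n => [|n] /=; rewrite ?addr0 // /adiag big_split. Qed.

Lemma adiag_prevB h1 h2 n :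
  adiag_prev (fun j k => h1 j k - h2 j k) n = adiag_prev h1 n - adiag_prev h2 n.
Proof. by case: n => [|n] /=; rewrite ?subr0 // /adiag sumrB. Qed.

Lemma adiag_prevZ c h n : adiag_prev (fun j k => c * h j k) n = c * adiag_prev h n.
Proof. by case: n => [|n] /=; rewrite ?mulr0 // /adiag mulr_sumr. Qed.

Lemma adiag_split h n : adiag h n = h n 0%N + adiag_prev (fun j k => h j k.+1) n.
Proof. by rewrite /adiag big_ord_recl subn0; case: n => [|n]; rewrite ?big_ord0. Qed.

Lemma binomT2S h j k :
  binomT2 h j k.+1 = binomT2 h j k + binomT2 (fun j k => h j k.+1) j k.
Proof.
by rewrite /binomT2 -binomTD; apply: eq_binomT => i _; rewrite binomTS mul1r.
Qed.

(* Vandermonde's convolution, summed along antidiagonals. *)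
Lemma adiag_prev_binomT2 h n : adiag_prev (binomT2 h) n = binomT 1 (adiag_prev h) n.
Proof.
elim: n h => [|n IH] h; first by rewrite binomT0.
rewrite binomTS mul1r.
have -> : binomT 1 (fun i => adiag_prev h i.+1) n =
    binomT 1 (fun i => h i 0%N) n + binomT 1 (adiag_prev (fun j k => h j k.+1)) n.
  by rewrite -binomTD; apply: eq_binomT => i _; apply: adiag_split.
have -> : adiag_prev (binomT2 h) n.+1 = binomT2 h n 0%N
    + adiag_prev (fun j k => binomT2 h j k.+1) n by exact: adiag_split.
rewrite (eq_adiag_prev _ _ n (binomT2S h)) adiag_prevD !IH.
have -> : binomT2 h n 0 = binomT 1 (fun i => h i 0%N) n.
  by apply: eq_binomT => i _; rewrite binomT0.
by rewrite addrCA addrA.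
Qed.

Lemma adiag_prev_telescope h n :
  adiag_prev (fun j k => h j.+1 k - h j k.+1) n.+1 = h n.+1 0%N - h 0%N n.+1.
Proof.
pose g k := h (n.+1 - k)%N k.
rewrite /= /adiag (eq_bigr (fun k : 'I_n.+1 => - (g k.+1 - g k))); last first.
  by move=> k _; rewrite /g subSS (subSn (ltn_ord k : (k <= n)%N)) opprB.
rewrite sumrN -(big_mkord xpredT (fun k => g k.+1 - g k)) telescope_sumr //.
by rewrite /g subn0 subnn opprB.
Qed.

End Antidiagonal.

Definition pbern_potential j k : rat :=
  binomT2 pbern j k - binomT 1 (pbern j) k - 2 * pbern j k.

Lemma pbern_potential_step j k :
  4 * pbern j k.+1 - binomT2 (fun j k => pbern j k.+1) j k - 2 * pbern j k =
  pbern_potential j.+1 k - pbern_potential j k.+1.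
Proof.
have binomT2_succ : binomT2 pbern j.+1 k =
    binomT2 pbern j k + binomT2 (fun i => pbern i.+1) j k.
  by rewrite /binomT2 binomTS mul1r.
have := pbern_balance j k.
rewrite /pbern_potential binomT2_succ binomT2S binomTS mul1r; lra.
Qed.

Lemma pbern_potential_0r n : pbern_potential n 0 = 2 ^+ n - 3.
Proof.
rewrite /pbern_potential binomT0 pbern_0r /binomT2.
rewrite (eq_binomT _ _ (fun i => 1 ^+ i)) ?binomT_expr; first by ring.
by move=> i _; rewrite binomT0 pbern_0r expr1n.
Qed.

Lemma pbern_potential_0l n : pbern_potential 0 n = - 2.
Proof. by rewrite /pbern_potential /binomT2 binomT0 pbern_0l; ring. Qed.

Lemma main_rec_adiag_pbern : main_rec (adiag pbern).
Proof.
case=> [|n]; first by rewrite binomT0 /adiag big_ord1 /= pbern_0l; lra.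
have adiagE i : adiag pbern i = 1 + adiag_prev (fun j k => pbern j k.+1) i.
  by rewrite adiag_split pbern_0r.
have binomT_adiag : binomT 1 (adiag pbern) n.+1 =
    2 ^+ n.+1 + adiag_prev (binomT2 (fun j k => pbern j k.+1)) n.+1.
  rewrite (eq_binomT _ _ (fun i => 1 ^+ i + adiag_prev (fun j k => pbern j k.+1) i)).
    by rewrite binomTD binomT_expr adiag_prev_binomT2.
  by move=> i _; rewrite adiagE expr1n.
have := eq_adiag_prev _ _ n.+1 pbern_potential_step.
rewrite adiag_prev_telescope pbern_potential_0r pbern_potential_0l.
rewrite !adiag_prevB !adiag_prevZ binomT_adiag (adiagE n.+1).
by rewrite -/(adiag_prev pbern n.+1); lra.
Qed.

Theorem theorem3p5 (n : nat) :
  (2 / 3 : rat) ^+ n * (pol_p n).[1 / 4] =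
  \sum_(0 <= k < n.+1) polyBernoulli (n - k) (- (Posz k)).
Proof.
have -> : \sum_(0 <= k < n.+1) polyBernoulli (n - k) (- (Posz k)) = adiag pbern n.
  by rewrite big_mkord; apply: eq_bigr => k _; rewrite polyBernoulliE.
exact: (main_rec_uniq _ _ main_rec_pS main_rec_adiag_pbern n).
Qed.
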